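(* Let $n$ be a prime with $n\equiv 1$ or $5\pmod 6$. Then there exists a one-factorization $\mathcal{R}$ of $K_{2n}$ on the vertex set $\{0,1,\dots,2n-1\}$ such that: (1) if $n\equiv 5\pmod 6$, then $\mathcal{R}=\{\mathcal{R}_{i,j}: 1\le i\le \frac{2n-1}{3},\ 1\le j\le 3\}$, where $\mathcal{R}_{i,1}\cup\mathcal{R}_{i,2}\cup\mathcal{R}_{i,3}=\mathcal{A}_i\cup\mathcal{B}_i\cup\mathcal{C}_{i-1}$ for $1\le i\le\frac{n-1}{2}$, and $\mathcal{R}_{i,1}=\mathcal{C}_{3i-n-2}$, $\mathcal{R}_{i,2}=\mathcal{C}_{3i-n-1}$, $\mathcal{R}_{i,3}=\mathcal{C}_{3i-n}$ for $\frac{n+1}{2}\le i\le\frac{2n-1}{3}$; (2) if $n\equiv 1\pmod 6$, then $\mathcal{R}=\{\mathcal{R}_{i,j}: 1\le i\le\frac{n-1}{2},\ 1\le j\le 3\}\cup\{\mathcal{C}_i:\frac{n-1}{2}\le i\le n-1\}$, where $\mathcal{R}_{i,1}\cup\mathcal{R}_{i,2}\cup\mathcal{R}_{i,3}=\mathcal{A}_i\cup\mathcal{B}_i\cup\mathcal{C}_{i-1}$ for $1\le i\le \frac{n-1}{2}$.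
   Context: For $1\le i\le \frac{n-1}{2}$: $\mathcal{A}_i=\{\{x,y\}: x,y\in\{0,\dots,n-1\},\ y-x\equiv i \pmod n\}$ and $\mathcal{B}_i=\{\{x,y\}: x,y\in\{n,\dots,2n-1\},\ y-x\equiv i\pmod n\}$. For $0\le i\le n-1$: $\mathcal{C}_i=\{\{x,y\}: 0\le x\le n-1,\ n\le y\le 2n-1,\ x+y\equiv i\pmod n\}$. A one-factor of $K_{2n}$ is a perfect matching; a one-factorization is a partition of the edge set of $K_{2n}$ into $2n-1$ one-factors. *)

From mathcomp Require Import all_boot.
Set Implicit Arguments. Unset Strict Implicit. Unset Printing Implicit Defensive.

Definition Aset (n i : nat) : {set {set 'I_(2*n)}} :=
  [set e : {set 'I_(2*n)} | [exists x : 'I_(2*n), exists y : 'I_(2*n),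
     [&& e == [set x; y], x < n, y < n & (y + n - x) %% n == i %% n]]].

Definition Bset (n i : nat) : {set {set 'I_(2*n)}} :=
  [set e : {set 'I_(2*n)} | [exists x : 'I_(2*n), exists y : 'I_(2*n),
     [&& e == [set x; y], n <= x, n <= y & (y + n - x) %% n == i %% n]]].

Definition Cset (n i : nat) : {set {set 'I_(2*n)}} :=
  [set e : {set 'I_(2*n)} | [exists x : 'I_(2*n), exists y : 'I_(2*n),
     [&& e == [set x; y], x < n, n <= y & (x + y) %% n == i %% n]]].

Definition K_edges (n : nat) : {set {set 'I_(2*n)}} :=
  [set e : {set 'I_(2*n)} | #|e| == 2].

Definition one_factor (n : nat) (F : {set {set 'I_(2*n)}}) : Prop :=
  F \subset K_edges n /\
  forall v : 'I_(2*n), #|[set e in F | v \in e]| = 1.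

Definition one_factorization (n : nat) (R : {set {set {set 'I_(2*n)}}}) : Prop :=
  partition R (K_edges n) /\
  (forall F, F \in R -> one_factor F) /\
  #|R| = 2 * n - 1.

Arguments Aset : clear implicits.
Arguments Bset : clear implicits.
Arguments Cset : clear implicits.

(* The edges of K_2n fall into the classes A_i, B_i (1 <= i <= (n-1)/2) and C_k (0 <= k < n).
   Every C_k is a perfect matching.  For i coprime to n, relabel the prism C_n x K_2 by sending
   lower vertex k to k*i and upper vertex n+k to n + (i-1 - k*i) mod n: its two n-cycles become
   A_i and B_i and its rungs become C_(i-1).  As n is odd, the prism splits into three perfect
   matchings, whose images are R_(i,1), R_(i,2), R_(i,3).  Together with the remaining C_k these
   are 3(n-1)/2 + (n+1)/2 = 2n-1 perfect matchings covering every edge of K_2n, so by counting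
   they partition the edge set. *)

From mathcomp Require Import all_boot zify.
Set Implicit Arguments. Unset Strict Implicit. Unset Printing Implicit Defensive.

Section MatchingOfInvolution.
Variables (T : finType) (phi g : T -> T).
Hypotheses (phi_inj : injective phi) (gK : involutive g) (g_nfix : forall p, g p != p).

Definition matching_of : {set {set T}} := [set [set phi p; phi (g p)] | p : T].

Lemma matching_of_card2 e : e \in matching_of -> #|e| = 2.
Proof. by case/imsetP=> p _ ->; rewrite cards2 (inj_eq phi_inj) eq_sym g_nfix. Qed.

Lemma matching_of_deg1 v : #|[set e in matching_of | v \in e]| = 1.
Proof.
have [p ->] : exists p, v = phi p by have /codomP[p ->] := injF_onto phi_inj v; exists p.
apply/eqP/cards1P; exists [set phi p; phi (g p)]; apply/setP => e; rewrite !inE.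
apply/andP/eqP => [[/imsetP[q _ ->]]|->]; last by rewrite set21; split=> //; apply: imset_f.
by rewrite !inE => /orP[] /eqP/phi_inj ->; rewrite ?gK 1?setUC.
Qed.

End MatchingOfInvolution.

Lemma card_perfect_matching (T : finType) (F : {set {set T}}) :
  (forall e, e \in F -> #|e| = 2) -> (forall v, #|[set e in F | v \in e]| = 1) ->
  #|F| * 2 = #|T|.
Proof.
move=> F2 F1.
have -> : #|F| * 2 = \sum_(e in F) \sum_v (v \in e).
  by rewrite -sum_nat_const; apply: eq_bigr => e /F2 <-; rewrite -sum1_card big_mkcond.
rewrite exchange_big /= -sum1_card; apply: eq_big => // v _.
rewrite -(F1 v) -sum1_card big_mkcond [RHS]big_mkcond; apply: eq_bigr => e _.
by rewrite inE; case: (e \in F) (v \in e) => [] [].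
Qed.

Lemma card_K_edges n : #|K_edges n| = n * (2 * n - 1).
Proof.
rewrite /K_edges card_draws card_ord bin2.
have -> : (2 * n).-1 = 2 * n - 1 by lia.
by rewrite -mulnA mul2n doubleK.
Qed.

Lemma one_factor_card n (F : {set {set 'I_(2 * n)}}) : one_factor F -> #|F| = n.
Proof.
case=> /subsetP FK F1.
have F2 e : e \in F -> #|e| = 2 by move/FK; rewrite inE => /eqP.
by have := card_perfect_matching F2 F1; rewrite card_ord; lia.
Qed.

(* A perfect matching of K_2n has n edges, so 2n-1 of them have total size
   n(2n-1) = #|K_edges n|: if they cover every edge they are pairwise disjoint. *)
Lemma one_factorization_of_cover n (f : 'I_(2 * n - 1) -> {set {set 'I_(2 * n)}}) :
  0 < n -> (forall t, one_factor (f t)) -> K_edges n \subset \bigcup_t f t ->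
  one_factorization [set f t | t : 'I_(2 * n - 1)].
Proof.
move=> n_gt0 f1 Kf; set R := [set f t | t in _].
have R1 F : F \in R -> one_factor F by case/imsetP=> t _ ->.
have coverR : cover R = K_edges n.
  apply/eqP; rewrite eqEsubset cover_imset Kf andbT.
  by apply/bigcupsP=> t _; case: (f1 t).
have sumR : \sum_(F in R) #|F| = #|R| * n.
  by rewrite -sum_nat_const; apply: eq_bigr => F /R1/one_factor_card.
have cardR : #|R| <= 2 * n - 1 by rewrite -[X in _ <= X]card_ord leq_imset_card.
have := leq_card_cover R; rewrite coverR sumR card_K_edges => -[le_nR triv].
have eqR : #|R| = 2 * n - 1.
  by apply/eqP; rewrite eqn_leq cardR -(leq_pmul2r n_gt0) mulnC.
split; last by split.
apply/and3P; split; [exact/eqP | |].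
- by rewrite -triv eqR mulnC.
- by apply/negP => /R1/one_factor_card; rewrite cards0; lia.
Qed.

Lemma one_factor_matching_of n (phi g : 'I_(2 * n) -> 'I_(2 * n)) :
  injective phi -> involutive g -> (forall p, g p != p) -> one_factor (matching_of phi g).
Proof.
move=> phi_inj gK g_nfix; split; last exact: matching_of_deg1.
by apply/subsetP => e /(matching_of_card2 phi_inj g_nfix) e2; rewrite inE e2.
Qed.

Section Prism.
Variable n : nat.
Hypotheses (n_odd : odd n) (n_ge3 : 3 <= n).

(* The prism C_n x K_2 on [0, 2n): the lower cycle 0, 1, ..., n-1 is traversed upwards,
   the upper cycle n, ..., 2n-1 downwards, and rungs join p and p + n. *)
Definition cyc_succ p := if p == n.-1 then 0 else p + 1.
Definition cyc_pred p := if p == n then (2 * n).-1 else p - 1.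
Definition rung p := if p < n then p + n else p - n.
Definition level p := if p < n then p else p - n.

Definition prism_adj p q :=
  [|| [&& p < n, q < n & q == cyc_succ p], [&& p < n, q < n & p == cyc_succ q],
      [&& n <= p, n <= q & q == cyc_pred p], [&& n <= p, n <= q & p == cyc_pred q]
    | q == rung p].

(* For odd n the prism splits into three perfect matchings: j = 1 pairs the levels
   {0,1}, {2,3}, ... on both cycles and uses the rung at level n-1; j = 2 pairs {1,2},
   {3,4}, ... and uses the rung at level 0; j = 3 takes the two edges {0, n-1} closing
   the cycles together with the remaining rungs. *)
Definition prism_match j p :=
  if j == 1 then
    if level p == n.-1 then rung p else if odd (level p) then p - 1 else p + 1
  else if j == 2 then
    if level p == 0 then rung p else if odd (level p) then p + 1 else p - 1
  else if level p == 0 then p + n.-1 else if level p == n.-1 then p - n.-1 else rung p.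

Ltac split_if := match goal with |- context [if ?b then _ else _] =>
  lazymatch b with context [if _ then _ else _] => fail | _ =>
  let H := fresh "H" in case H: b; cbv iota end end.
Ltac crunch := rewrite /prism_adj /prism_match /level /rung /cyc_succ /cyc_pred;
  repeat split_if; lia.

Lemma rung_lt p : p < 2 * n -> rung p < 2 * n. Proof. crunch. Qed.
Lemma rungK p : p < 2 * n -> rung (rung p) = p. Proof. crunch. Qed.
Lemma rung_nfix p : p < 2 * n -> rung p != p. Proof. crunch. Qed.

Lemma prism_match_lt j p : p < 2 * n -> prism_match j p < 2 * n. Proof. crunch. Qed.
Lemma prism_matchK j p : p < 2 * n -> prism_match j (prism_match j p) = p. Proof. crunch. Qed.
Lemma prism_match_nfix j p : p < 2 * n -> prism_match j p != p. Proof. crunch. Qed.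
Lemma prism_match_adj j p : p < 2 * n -> prism_adj p (prism_match j p). Proof. crunch. Qed.

Lemma prism_match_succ p : p < n -> exists2 j, 1 <= j <= 3 & prism_match j p = cyc_succ p.
Proof.
move=> lt_pn; case: (boolP (p == n.-1)) => pn; first by exists 3 => //; crunch.
by case: (boolP (odd p)) => p_odd; [exists 2|exists 1]; crunch.
Qed.

Lemma prism_match_pred p : n <= p < 2 * n -> exists2 j, 1 <= j <= 3 & prism_match j p = cyc_pred p.
Proof.
move=> hp; case: (boolP (p == n)) => pn; first by exists 3 => //; crunch.
by case: (boolP (odd (p - n))) => p_odd; [exists 1|exists 2]; crunch.
Qed.

Lemma prism_match_rung p : p < n -> exists2 j, 1 <= j <= 3 & prism_match j p = rung p.
Proof.
move=> lt_pn; case: (boolP (p == n.-1)) => pn; first by exists 1 => //; crunch.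
by case: (boolP (p == 0)) => p0; [exists 2|exists 3]; crunch.
Qed.

End Prism.

Section Relabel.
Variable n : nat.

Lemma eq_mulmod_window i a b : coprime n i -> a * i = b * i %[mod n] ->
  a < b + n -> b < a + n -> a = b.
Proof.
move=> co_ni; wlog le_ba : a b / b <= a.
  move=> W E ltab ltba; case: (leqP b a) => [|/ltnW] le; first exact: W.
  by symmetry; apply: W.
move=> /eqP; rewrite eqn_mod_dvd ?leq_mul2r ?le_ba ?orbT // -mulnBl Gauss_dvdl //.
move=> n_dvd lt_ab _; case: (posnP (a - b)) => [|pos]; first lia.
by have := dvdn_leq pos n_dvd; lia.
Qed.

Lemma eq_mod_window a b : a = b %[mod n] -> a < b + n -> b < a + n -> a = b.
Proof. by move=> E; apply: (@eq_mulmod_window 1); rewrite ?muln1 ?coprimen1. Qed.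

(* For p = n + k, (2n - p) * i = (n - k) * i = - k * i (mod n): upper vertex n + k goes
   to n + (c - k * i) mod n, so rungs land in C_c and both cycles become cycles of step i. *)
Definition relabel i c p :=
  if p < n then (p * i) %% n else n + (c + (2 * n - p) * i) %% n.

Lemma relabel_lt i c p : p < 2 * n -> relabel i c p < 2 * n.
Proof.
move=> lt_p; have n_gt0 : 0 < n by lia.
rewrite /relabel; case: ifP => _.
  by have := ltn_pmod (p * i) n_gt0; lia.
by have := ltn_pmod (c + (2 * n - p) * i) n_gt0; lia.
Qed.

Lemma relabel_lower i c p : p < 2 * n -> (relabel i c p < n) = (p < n).
Proof.
move=> lt_p; rewrite /relabel; case: ifP => lt_pn; last lia.
by rewrite ltn_pmod //; lia.
Qed.

Lemma relabel_inj i c p q : coprime n i -> p < 2 * n -> q < 2 * n ->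
  relabel i c p = relabel i c q -> p = q.
Proof.
move=> co_ni lt_p lt_q E.
have := relabel_lower i c lt_p; have := relabel_lower i c lt_q; rewrite E => ->.
move: E; rewrite /relabel; case: ifP => lt_qn; case: ifP => lt_pn // E _.
  by apply: (eq_mulmod_window co_ni); rewrite ?E; lia.
move/addnI/eqP: E; rewrite eqn_modDl => /eqP E.
have := eq_mulmod_window co_ni E; lia.
Qed.

Lemma relabel_succ i c p : p < n ->
  relabel i c (cyc_succ n p) = (relabel i c p + i) %% n.
Proof.
move=> lt_pn; have lt_sn : cyc_succ n p < n by rewrite /cyc_succ; case: ifP; lia.
rewrite /relabel lt_sn lt_pn modnDml /cyc_succ; case: ifP => [/eqP pn|_].
  have -> : p * i + i = n * i by rewrite -mulSnr; congr (_ * _); lia.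
  by rewrite mul0n mod0n modnMr.
by rewrite mulnDl mul1n.
Qed.

Lemma relabel_pred i c p : n <= p < 2 * n ->
  relabel i c (cyc_pred n p) = n + (relabel i c p - n + i) %% n.
Proof.
move=> lt_p; have lt_pn : (p < n) = false by lia.
have lt_qn : (cyc_pred n p < n) = false by rewrite /cyc_pred; case: ifP; lia.
rewrite /relabel lt_pn lt_qn addKn modnDml /cyc_pred; congr (n + _); case: ifP => [/eqP pn|_].
  have -> : 2 * n - (2 * n).-1 = 1 by lia.
  have -> : 2 * n - p = n by lia.
  by rewrite mul1n [in RHS]addnAC -[in RHS]modnDmr modnMr addn0.
by rewrite -addnA -mulSnr; do 3 f_equal; lia.
Qed.

Lemma relabel_rung i c p : p < n -> (relabel i c p + relabel i c (rung n p)) %% n = c %% n.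
Proof.
move=> lt_pn; have lt_rn : (rung n p < n) = false by rewrite /rung lt_pn; lia.
rewrite /relabel lt_pn lt_rn /rung lt_pn addnCA modnDl modnDm addnCA -mulnDl.
have -> : p + (2 * n - (p + n)) = n by lia.
by rewrite addnC mulnC modnMDl.
Qed.

End Relabel.

Section RelabelledPrism.
Variable n : nat.
Hypotheses (n_odd : odd n) (n_ge3 : 3 <= n).

Lemma diff_mod_eq x y i : x <= y + n ->
  ((y + n - x) %% n == i %% n) = (y == x + i %[mod n]).
Proof. by move=> le_xy; rewrite -(eqn_modDr x) subnK // modnDr [i + x]addnC. Qed.

Definition ordfun (f : nat -> nat) (p : 'I_(2 * n)) : 'I_(2 * n) := insubd p (f p).

Lemma ordfunE (f : nat -> nat) (p : 'I_(2 * n)) : f p < 2 * n -> ordfun f p = f p :> nat.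
Proof. by move=> lt_f; rewrite val_insubd lt_f. Qed.

Definition relabel_ord i c := ordfun (relabel n i c).

Lemma relabel_ordE i c (p : 'I_(2 * n)) : relabel_ord i c p = relabel n i c p :> nat.
Proof. by rewrite ordfunE // relabel_lt. Qed.

Lemma relabel_ord_lower i c (p : 'I_(2 * n)) : (relabel_ord i c p < n) = (p < n).
Proof. by rewrite relabel_ordE relabel_lower. Qed.

Lemma relabel_ord_inj i c : coprime n i -> injective (relabel_ord i c).
Proof.
move=> co_ni p q /(congr1 (@nat_of_ord _)); rewrite !relabel_ordE => E; apply: val_inj.
exact: relabel_inj co_ni (ltn_ord p) (ltn_ord q) E.
Qed.

Lemma relabel_ord_onto i c x : coprime n i -> exists p, x = relabel_ord i c p.
Proof.
by move=> co_ni; have /codomP[p ->] := injF_onto (@relabel_ord_inj i c co_ni) x; exists p.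
Qed.

Lemma Aset_relabel i c e : coprime n i -> e \in Aset n i <->
  exists p q : 'I_(2 * n),
    [/\ p < n, q = cyc_succ n p :> nat & e = [set relabel_ord i c p; relabel_ord i c q]].
Proof.
move=> co_ni; split.
  rewrite inE => /existsP[x /existsP[y /and4P[/eqP -> lt_x lt_y]]].
  have [p xE] := @relabel_ord_onto i c x co_ni; subst x.
  rewrite diff_mod_eq => [/eqP yE|]; last lia; rewrite relabel_ord_lower in lt_x.
  have lt_s : cyc_succ n p < 2 * n by rewrite /cyc_succ; case: ifP; lia.
  exists p, (ordfun (cyc_succ n) p); rewrite ordfunE //; split=> //; congr [set _; _].
  apply: ord_inj; rewrite relabel_ordE ordfunE // relabel_succ // -(modn_small lt_y) yE.
  by rewrite relabel_ordE.
case=> p [q [lt_p qE ->]]; rewrite inE; apply/existsP; exists (relabel_ord i c p).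
apply/existsP; exists (relabel_ord i c q).
have lt_q : q < n by rewrite qE /cyc_succ; case: ifP; lia.
have lt_rp : relabel_ord i c p < n by rewrite relabel_ord_lower.
rewrite eqxx !relabel_ord_lower lt_p lt_q diff_mod_eq; last lia.
by rewrite !relabel_ordE qE relabel_succ // modn_mod eqxx.
Qed.

Lemma Bset_relabel i c e : coprime n i -> e \in Bset n i <->
  exists p q : 'I_(2 * n),
    [/\ n <= p, q = cyc_pred n p :> nat & e = [set relabel_ord i c p; relabel_ord i c q]].
Proof.
have pred_mod x : n <= x -> n + (x - n + i) %% n = x + i %[mod n].
  by move=> le_nx; rewrite modnDl modn_mod -[in RHS](subnK le_nx) addnAC modnDr.
move=> co_ni; split.
  rewrite inE => /existsP[x /existsP[y /and4P[/eqP -> le_x le_y]]].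
  have [p xE] := @relabel_ord_onto i c x co_ni; subst x.
  rewrite diff_mod_eq => [/eqP yE|]; last by have := ltn_ord (relabel_ord i c p); lia.
  have le_p : n <= p by move: le_x; rewrite leqNgt relabel_ord_lower -leqNgt.
  have lt_s : cyc_pred n p < 2 * n by have := ltn_ord p; rewrite /cyc_pred; case: ifP; lia.
  exists p, (ordfun (cyc_pred n) p); rewrite ordfunE //; split=> //; congr [set _; _].
  apply: ord_inj.
  rewrite relabel_ordE ordfunE // relabel_pred ?le_p ?ltn_ord // -relabel_ordE.
  have lt_y := ltn_ord y; rewrite -(subnK le_y) addnC; congr (n + _).
  rewrite -(modn_small (_ : y - n < n)); last lia.
  by apply/eqP; rewrite -(eqn_modDr n) subnK // addnAC subnK // yE.
case=> p [q [le_p qE ->]]; rewrite inE; apply/existsP; exists (relabel_ord i c p).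
apply/existsP; exists (relabel_ord i c q).
have lt_p := ltn_ord p; have le_q : n <= q by rewrite qE /cyc_pred; case: ifP; lia.
have le_rp : n <= relabel_ord i c p by rewrite leqNgt relabel_ord_lower -leqNgt.
have le_rq : n <= relabel_ord i c q by rewrite leqNgt relabel_ord_lower -leqNgt.
have lt_rp := ltn_ord (relabel_ord i c p).
rewrite eqxx le_rp le_rq diff_mod_eq; last lia.
by rewrite !relabel_ordE qE relabel_pred ?le_p // pred_mod ?eqxx // -relabel_ordE.
Qed.

Lemma Cset_relabel i c e : coprime n i -> e \in Cset n c <->
  exists p q : 'I_(2 * n),
    [/\ p < n, q = rung n p :> nat & e = [set relabel_ord i c p; relabel_ord i c q]].
Proof.
move=> co_ni; split.
  rewrite inE => /existsP[x /existsP[y /and4P[/eqP -> lt_x le_y /eqP yE]]].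
  have [p xE] := @relabel_ord_onto i c x co_ni; subst x.
  have lt_p : p < n by rewrite -(relabel_ord_lower i c).
  have lt_r : rung n p < 2 * n by rewrite /rung lt_p; lia.
  exists p, (ordfun (rung n) p); rewrite ordfunE //; split=> //; congr [set _; _].
  have le_r : n <= relabel n i c (rung n p) by rewrite leqNgt relabel_lower // /rung lt_p; lia.
  apply: ord_inj; rewrite relabel_ordE ordfunE //.
  have lt_y := ltn_ord y; have lt_rr := relabel_lt i c lt_r.
  apply: (@eq_mod_window n); try lia.
  by apply/eqP; rewrite -(eqn_modDl (relabel_ord i c p)) yE relabel_ordE relabel_rung.
case=> p [q [lt_p qE ->]]; rewrite inE; apply/existsP; exists (relabel_ord i c p).
apply/existsP; exists (relabel_ord i c q).
have le_rq : n <= relabel_ord i c q by rewrite leqNgt relabel_ord_lower qE /rung lt_p; lia.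
by rewrite eqxx relabel_ord_lower lt_p le_rq !relabel_ordE qE relabel_rung // eqxx.
Qed.

Lemma relabel_prism_edge i c (p q : 'I_(2 * n)) : coprime n i -> prism_adj n p q ->
  [set relabel_ord i c p; relabel_ord i c q] \in Aset n i :|: Bset n i :|: Cset n c.
Proof.
move=> co_ni; rewrite !in_setU -orbA /prism_adj.
case/or4P => [/and3P[lt_p lt_q /eqP qE]|/and3P[lt_p lt_q /eqP pE]|/and3P[le_p le_q /eqP qE]|].
- by apply/or3P; constructor 1; apply/(Aset_relabel c _ co_ni); exists p, q.
- by rewrite setUC; apply/or3P; constructor 1; apply/(Aset_relabel c _ co_ni); exists q, p.
- by apply/or3P; constructor 2; apply/(Bset_relabel c _ co_ni); exists p, q.
case/orP => [/and3P[le_p le_q /eqP pE]|/eqP qE].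
  by rewrite setUC; apply/or3P; constructor 2; apply/(Bset_relabel c _ co_ni); exists q, p.
apply/or3P; constructor 3; case: (ltnP p n) => [lt_p|le_p].
  by apply/(Cset_relabel c _ co_ni); exists p, q.
have lt_q : q < n by have := ltn_ord p; rewrite qE /rung (ltnNge p n) le_p /=; lia.
rewrite setUC; apply/(Cset_relabel c _ co_ni); exists q, p; split=> //.
by rewrite /rung lt_q qE /rung (ltnNge p n) le_p /=; lia.
Qed.

Lemma ordfun_involutive (g : nat -> nat) : (forall p, p < 2 * n -> g p < 2 * n) ->
  (forall p, p < 2 * n -> g (g p) = p) -> involutive (ordfun g).
Proof. by move=> g_lt gK p; apply: ord_inj; rewrite !ordfunE ?gK ?g_lt. Qed.

Lemma ordfun_nfix (g : nat -> nat) : (forall p, p < 2 * n -> g p < 2 * n) ->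
  (forall p, p < 2 * n -> g p != p) -> forall p, ordfun g p != p.
Proof. by move=> g_lt g_nfix p; rewrite -(inj_eq val_inj) /= ordfunE ?g_nfix ?g_lt. Qed.

Definition prism_factor i c j := matching_of (relabel_ord i c) (ordfun (prism_match n j)).
Definition rung_factor c := matching_of (relabel_ord 1 c) (ordfun (rung n)).

Lemma prism_factor_one i c j : coprime n i -> one_factor (prism_factor i c j).
Proof.
move=> co_ni; apply: one_factor_matching_of; first exact: relabel_ord_inj.
  by apply: ordfun_involutive => p; [apply: prism_match_lt|apply: prism_matchK].
by apply: ordfun_nfix => p; [apply: prism_match_lt|apply: prism_match_nfix].
Qed.

Lemma rung_factor_one c : one_factor (rung_factor c).
Proof.
apply: one_factor_matching_of; first by apply: relabel_ord_inj; apply: coprimen1.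
  by apply: ordfun_involutive => p; [apply: rung_lt|apply: rungK].
by apply: ordfun_nfix => p; [apply: rung_lt|apply: rung_nfix].
Qed.

Lemma Cset_rung_factor c : Cset n c = rung_factor c.
Proof.
apply/setP => e; apply/idP/imsetP.
  case/(Cset_relabel c e (coprimen1 n)) => p [q [lt_p qE ->]].
  exists p => //; congr [set _; relabel_ord _ _ _].
  by apply: ord_inj; rewrite ordfunE -qE.
case=> p _ ->; apply/(Cset_relabel c _ (coprimen1 n)); case: (ltnP p n) => [lt_p|le_p].
  exists p, (ordfun (rung n) p); rewrite ordfunE ?rung_lt //.
exists (ordfun (rung n) p), p; rewrite setUC ordfunE ?rung_lt //.
have lt_p := ltn_ord p; split; rewrite ?rungK //.
by rewrite /rung (ltnNge p n) le_p /=; lia.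
Qed.

Lemma prism_factors_union i c : coprime n i ->
  prism_factor i c 1 :|: prism_factor i c 2 :|: prism_factor i c 3 =
  Aset n i :|: Bset n i :|: Cset n c.
Proof.
move=> co_ni.
have in_union j e : 1 <= j <= 3 -> e \in prism_factor i c j ->
    e \in prism_factor i c 1 :|: prism_factor i c 2 :|: prism_factor i c 3.
  by case: j => [|[|[|[|j]]]] //= _ e_in; rewrite !in_setU e_in ?orbT.
have in_factor j (p q : 'I_(2 * n)) : prism_match n j p = q ->
    [set relabel_ord i c p; relabel_ord i c q] \in prism_factor i c j.
  move=> qE; apply/imsetP; exists p => //; congr [set _; relabel_ord _ _ _].
  by apply: ord_inj; rewrite ordfunE ?prism_match_lt.
apply/setP => e; apply/idP/idP.
  case/setUP => [/setUP[]|] /imsetP[p _ ->]; apply: relabel_prism_edge => //;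
    by rewrite ordfunE ?prism_match_lt ?prism_match_adj.
case/setUP => [/setUP[]|].
- case/(Aset_relabel c _ co_ni) => p [q [lt_p qE ->]].
  have [j j3 jE] := prism_match_succ n_odd n_ge3 lt_p.
  by apply: (in_union j) => //; apply: in_factor; rewrite jE.
- case/(Bset_relabel c _ co_ni) => p [q [le_p qE ->]].
  have [j j3 jE] : exists2 j, 1 <= j <= 3 & prism_match n j p = cyc_pred n p.
    by apply: prism_match_pred; rewrite // le_p ltn_ord.
  by apply: (in_union j) => //; apply: in_factor; rewrite jE.
- case/(Cset_relabel c _ co_ni) => p [q [lt_p qE ->]].
  have [j j3 jE] := prism_match_rung n_odd n_ge3 lt_p.
  by apply: (in_union j) => //; apply: in_factor; rewrite jE.
Qed.

End RelabelledPrism.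

Section Classification.
Variable n : nat.
Hypothesis n_odd : odd n.
Let h := (n - 1) %/ 2.

Lemma cyc_dist a b : a < n -> b < n -> a != b ->
  exists2 d, 1 <= d <= h & ((b + n - a) %% n == d %% n) || ((a + n - b) %% n == d %% n).
Proof.
wlog lt_ab : a b / a < b.
  move=> W lt_a lt_b ne_ab; case: (ltngtP a b) => [lt|lt|eq]; first exact: W.
    by have [d hd dE] := W b a lt lt_b lt_a (negbT (ltn_eqF lt)); exists d; rewrite // orbC.
  by rewrite eq eqxx in ne_ab.
move=> lt_a lt_b _; have -> : b + n - a = b - a + n by lia.
rewrite modnDr modn_small; last lia.
have -> : (a + n - b) %% n = a + n - b by rewrite modn_small; lia.
case: (leqP (b - a) h) => dist.
  by exists (b - a); rewrite ?modn_small ?eqxx //; lia.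
by exists (a + n - b); rewrite ?modn_small ?eqxx ?orbT //; lia.
Qed.

Lemma K_edges_classify e : e \in K_edges n ->
  (exists2 d, 1 <= d <= h & e \in Aset n d :|: Bset n d :|: Cset n (d - 1)) \/
  (exists2 k, h <= k < n & e \in Cset n k).
Proof.
rewrite inE => /cards2P[x [y [ne_xy ->]]].
have lt_x := ltn_ord x; have lt_y := ltn_ord y.
have inC (u v : 'I_(2 * n)) : u < n -> n <= v -> [set u; v] \in Cset n ((u + v) %% n).
  move=> lt_u le_v; rewrite inE; apply/existsP; exists u; apply/existsP; exists v.
  by rewrite eqxx lt_u le_v modn_mod eqxx.
have fromC k : k < n -> [set x; y] \in Cset n k ->
    (exists2 d, 1 <= d <= h & [set x; y] \in Aset n d :|: Bset n d :|: Cset n (d - 1)) \/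
    (exists2 k, h <= k < n & [set x; y] \in Cset n k).
  move=> lt_k xyC; case: (ltnP k h) => [lt_kh|le_hk]; last by right; exists k; rewrite ?le_hk.
  by left; exists k.+1; rewrite ?subn1 ?in_setU ?xyC ?orbT //; lia.
have ne_val : nat_of_ord x != y by [].
case: (ltnP x n) => lt_xn; case: (ltnP y n) => lt_yn.
- left; have [d hd dE] := cyc_dist lt_xn lt_yn ne_val; exists d => //.
  rewrite !in_setU; apply/orP; left; apply/orP; left.
  case/orP: dE => E; rewrite inE; apply/existsP; [exists x|exists y];
    apply/existsP; [exists y|exists x].
    by rewrite eqxx lt_xn lt_yn.
  by rewrite setUC eqxx lt_xn lt_yn.
- by apply: (fromC _ _ (inC _ _ lt_xn lt_yn)); rewrite ltn_mod; lia.
- by rewrite setUC in fromC *; apply: (fromC _ _ (inC _ _ lt_yn lt_xn)); rewrite ltn_mod; lia.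
- left; have ne_sub : x - n != y - n by apply: contra ne_val => /eqP E; apply/eqP; lia.
  have E1 : y - n + n - (x - n) = y + n - x by lia.
  have E2 : x - n + n - (y - n) = x + n - y by lia.
  have [||d hd] := @cyc_dist (x - n) (y - n) _ _ ne_sub; [lia|lia|]; rewrite E1 E2 => dE.
  exists d => //; rewrite !in_setU; apply/orP; left; apply/orP; right.
  case/orP: dE => E; rewrite inE; apply/existsP; [exists x|exists y];
    apply/existsP; [exists y|exists x].
    by rewrite eqxx lt_xn lt_yn.
  by rewrite setUC eqxx lt_xn lt_yn.
Qed.

End Classification.

Section Factorization.
Variable n : nat.
Hypotheses (n_prime : prime n) (n_odd : odd n).
Let h := (n - 1) %/ 2.

Lemma coprime_small i : 0 < i < n -> coprime n i.
Proof. by move=> hi; rewrite prime_coprime //; apply/negP => /dvdn_leq; lia. Qed.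

(* Factor 3(i-1) + (j-1) is the paper's R_(i,j) for i <= h; factors 3h, ..., 2n-2
   are C_h, ..., C_(n-1). *)
Definition factor t :=
  if t < 3 * h then prism_factor n (t %/ 3).+1 (t %/ 3) (t %% 3).+1 else Cset n (t - 2 * h).

Definition Rfactor i j := factor (3 * (i - 1) + (j - 1)).

Lemma Rfactor_lower i j : 1 <= i <= h -> 1 <= j <= 3 -> Rfactor i j = prism_factor n i (i - 1) j.
Proof. by move=> hi hj; rewrite /Rfactor /factor ifT; [congr prism_factor|]; lia. Qed.

Lemma factor_upper t : 3 * h <= t -> factor t = Cset n (t - 2 * h).
Proof. by move=> ht; rewrite /factor ifF //; lia. Qed.

Lemma factor_one t : t < 2 * n - 1 -> one_factor (factor t).
Proof.
have n_ge3 : 3 <= n by have := prime_gt1 n_prime; lia.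
move=> lt_t; rewrite /factor; case: ifP => [lt_th|_].
  by apply: prism_factor_one => //; apply: coprime_small; lia.
by rewrite Cset_rung_factor //; apply: rung_factor_one.
Qed.

Lemma K_edges_sub_factors : K_edges n \subset \bigcup_(t < 2 * n - 1) factor t.
Proof.
have n_ge3 : 3 <= n by have := prime_gt1 n_prime; lia.
apply/subsetP => e /(K_edges_classify n_odd) [[d hd]|[k hk]] e_in; apply/bigcupP.
  rewrite -(prism_factors_union n_odd n_ge3 _ (coprime_small _)) in e_in; last lia.
  have [j hj e_j] : exists2 j, 1 <= j <= 3 & e \in prism_factor n d (d - 1) j.
    by case/setUP: e_in => [/setUP[]|] ?; [exists 1|exists 2|exists 3].
  have lt_t : 3 * (d - 1) + (j - 1) < 2 * n - 1 by lia.
  by exists (Ordinal lt_t) => //=; rewrite -/(Rfactor d j) Rfactor_lower.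
have lt_t : k + 2 * h < 2 * n - 1 by lia.
by exists (Ordinal lt_t) => //=; rewrite factor_upper ?addnK //; lia.
Qed.

Lemma mem_factors (F : {set {set 'I_(2 * n)}}) :
  F \in [set factor t | t : 'I_(2 * n - 1)] <-> exists2 t, t < 2 * n - 1 & F = factor t.
Proof.
split=> [/imsetP[t _ ->]|[t lt_t ->]]; first by exists t.
by apply/imsetP; exists (Ordinal lt_t).
Qed.

Lemma mem_factors_Rfactor (F : {set {set 'I_(2 * n)}}) : 3 %| 2 * n - 1 ->
  F \in [set factor t | t : 'I_(2 * n - 1)] <->
  exists i j, [/\ 1 <= i <= (2 * n - 1) %/ 3, 1 <= j <= 3 & F = Rfactor i j].
Proof.
move=> dvd3; rewrite mem_factors; split=> [[t lt_t ->]|[i [j [hi hj ->]]]].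
  by exists (t %/ 3).+1, (t %% 3).+1; split; [lia|lia|congr factor; lia].
by exists (3 * (i - 1) + (j - 1)); first lia.
Qed.

Lemma mem_factors_Rfactor_Cset (F : {set {set 'I_(2 * n)}}) :
  F \in [set factor t | t : 'I_(2 * n - 1)] <->
  (exists i j, [/\ 1 <= i <= h, 1 <= j <= 3 & F = Rfactor i j]) \/
  (exists i, h <= i <= n - 1 /\ F = Cset n i).
Proof.
rewrite mem_factors; split=> [[t lt_t ->]|[[i [j [hi hj ->]]]|[i [hi ->]]]].
- case: (ltnP t (3 * h)) => [lt_th|le_ht].
    by left; exists (t %/ 3).+1, (t %% 3).+1; split; [lia|lia|congr factor; lia].
  by right; exists (t - 2 * h); split; [lia|exact: factor_upper].
- by exists (3 * (i - 1) + (j - 1)); first lia.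
- by exists (i + 2 * h); rewrite ?factor_upper ?addnK //; lia.
Qed.

Lemma Rfactor_union i : 1 <= i <= h ->
  Rfactor i 1 :|: Rfactor i 2 :|: Rfactor i 3 = Aset n i :|: Bset n i :|: Cset n (i - 1).
Proof.
have n_ge3 : 3 <= n by have := prime_gt1 n_prime; lia.
move=> hi; rewrite !Rfactor_lower //.
by apply: prism_factors_union => //; apply: coprime_small; lia.
Qed.

Lemma Rfactor_upper i j : h < i -> 1 <= j -> Rfactor i j = Cset n (3 * i + j - 3 - n).
Proof. by move=> hi hj; rewrite /Rfactor factor_upper; [congr Cset|]; lia. Qed.

End Factorization.

Unset Implicit Arguments.

Theorem lemma4 (n : nat) :
  prime n -> (n %% 6 = 1 \/ n %% 6 = 5) ->
  exists R : {set {set {set 'I_(2*n)}}},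
    one_factorization R /\
    exists Rf : nat -> nat -> {set {set 'I_(2*n)}},
      (n %% 6 = 5 ->
        (forall F, F \in R <->
           exists i j, [/\ 1 <= i <= (2 * n - 1) %/ 3, 1 <= j <= 3 & F = Rf i j]) /\
        (forall i, 1 <= i <= (n - 1) %/ 2 ->
           Rf i 1 :|: Rf i 2 :|: Rf i 3 = Aset n i :|: Bset n i :|: Cset n (i - 1)) /\
        (forall i, (n + 1) %/ 2 <= i <= (2 * n - 1) %/ 3 ->
           [/\ Rf i 1 = Cset n (3 * i - n - 2),
               Rf i 2 = Cset n (3 * i - n - 1) &
               Rf i 3 = Cset n (3 * i - n)])) /\
      (n %% 6 = 1 ->
        (forall F, F \in R <->
           (exists i j, [/\ 1 <= i <= (n - 1) %/ 2, 1 <= j <= 3 & F = Rf i j]) \/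
           (exists i, (n - 1) %/ 2 <= i <= n - 1 /\ F = Cset n i)) /\
        (forall i, 1 <= i <= (n - 1) %/ 2 ->
           Rf i 1 :|: Rf i 2 :|: Rf i 3 = Aset n i :|: Bset n i :|: Cset n (i - 1))).
Proof.
move=> n_prime n_mod6; have n_odd : odd n by lia.
exists [set factor n t | t : 'I_(2 * n - 1)]; split.
  apply: one_factorization_of_cover; first lia.
    by move=> t; apply: factor_one => //; apply: ltn_ord.
  exact: K_edges_sub_factors.
exists (Rfactor n); split=> n_mod6_eq.
  split; [|split].
  - by move=> F; apply: mem_factors_Rfactor; lia.
  - exact: Rfactor_union.
  - by move=> i hi; rewrite !Rfactor_upper; try lia; split; congr Cset; lia.
by split; [exact: mem_factors_Rfactor_Cset | exact: Rfactor_union].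
Qed.
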